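(* Let $H=\varprojlim\langle\{H_n\},\{h^n_k\}_{k<n}\rangle$ be a profinite poset and $\mathbb{P}=\varprojlim\langle\{P_n\},\{p^n_k\}_{k<n}\rangle$ where $\langle\{P_n\},\{p^n_k\}\rangle$ is a Fraïssé sequence in the category of finite posets with quotient maps, and let $f:\mathbb{P}\to H$ be a continuous quotient map. Then there is a continuous, join-preserving quotient map $q:\mathbb{O}(\mathbb{P})\to\mathbb{O}(H)$ such that $q\circ\phi=\psi\circ f$, where $\phi:\mathbb{P}\to\mathbb{O}(\mathbb{P})$ and $\psi:H\to\mathbb{O}(H)$ are given by $(x_n)\mapsto(\downarrow x_n)$.
   Context: A quotient map between posets is a surjective order-preserving map $\phi:A\to B$ such that for all $a\le b$ in $B$ there are $x\le y$ in $A$ with $\phi(x)=a,\phi(y)=b$. A profinite poset is an inverse limit $\{(x_n)\in\prod_nP_n:p^{n+1}_n(x_{n+1})=x_n\ \forall n\}$ of nonempty finite posets $P_n$ with quotient maps $p^m_k:P_m\to P_k$ ($k<m$, $p^k_l\circ p^m_k=p^m_l$), ordered coordinatewise, with the subspace topology of the product of discrete spaces. Fraïssé sequence: (U) for every finite poset $X$ there are $n$ and a quotient map $P_n\to X$; (A) for every $k$, every finite poset $Y$ and quotient map $f:Y\to P_k$ there exist $\ell>k$ and a quotient map $g:P_\ell\to Y$ with $f\circ g=p^\ell_k$. $\downarrow x=\{m:m\le x\}$; $\mathcal{O}(P_n)$ is the set of down-sets of $P_n$ under inclusion; for a quotient map $p:Q\to R$ of finite posets, $\hat p(\emptyset)=\emptyset$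 and $\hat p(A)=\bigcup_i\downarrow p(a_i)$ over the maximal elements $a_i$ of $A$. For such an inverse system with limit $P$, $\mathbb{O}(P):=\{(A_n)\in\prod_n\mathcal{O}(P_n):\widehat{p^{n+1}_n}(A_{n+1})=A_n\ \forall n\}$, ordered coordinatewise by inclusion and topologized as a subspace of $\prod_n\mathcal{O}(P_n)$ with discrete factors; it is a lattice with join $(A_n)\vee(B_n)=(A_n\cup B_n)$. *)

From mathcomp Require Import all_boot.
Set Implicit Arguments. Unset Strict Implicit. Unset Printing Implicit Defensive.

Record finPoset := FinPoset {
  carrier :> finType;
  le : rel carrier;
  le_refl : forall x, le x x;
  le_anti : forall x y, le x y -> le y x -> x = y;
  le_trans : forall x y z, le x y -> le y z -> le x z }.
Arguments le {f}.

Definition fquot (A B : finPoset) (f : A -> B) : Prop :=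
  (forall b : B, exists a : A, f a = b) /\
  (forall x y : A, le x y -> le (f x) (f y)) /\
  (forall a b : B, le a b -> exists x y : A, [/\ le x y, f x = a & f y = b]).

Fixpoint bond (P : nat -> finPoset) (p : forall n, P n.+1 -> P n) (k d : nat)
  : P (d + k) -> P k :=
  match d return P (d + k) -> P k with
  | 0 => fun x => x
  | d'.+1 => fun x => @bond P p k d' (p (d' + k) x)
  end.
Arguments bond {P} p k d.
(* bond p k d = p^{d+k}_k *)

Definition inv_system (P : nat -> finPoset) (p : forall n, P n.+1 -> P n) : Prop :=
  (forall n, 0 < #|P n|) /\ (forall n, fquot (p n)).

Definition fraisse (P : nat -> finPoset) (p : forall n, P n.+1 -> P n) : Prop :=
  (forall X : finPoset, 0 < #|X| -> exists n (g : P n -> X), fquot g) /\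
  (forall k (Y : finPoset) (f : Y -> P k), fquot f ->
     exists d (g : P (d.+1 + k) -> Y), fquot g /\ forall x, f (g x) = bond p k d.+1 x).

Definition inlim (P : nat -> finPoset) (p : forall n, P n.+1 -> P n)
  (x : forall n, P n) : Prop := forall n, p n (x n.+1) = x n.

Definition lim_le (P : nat -> finPoset) (x y : forall n, P n) : Prop :=
  forall n, le (x n) (y n).

(** Topology: subspace of a countable product of finite discrete spaces.
    [U] is open in the subspace [S] iff every point of [U] in [S] has a basic
    cylinder neighbourhood (fixing coordinates 0..N) whose trace on [S] lies in [U]. *)
Definition seq_open (X : nat -> Type) (S : (forall n, X n) -> Prop)
  (U : (forall n, X n) -> Prop) : Prop :=
  forall x, S x -> U x ->
    exists N, forall y, S y -> (forall i, i <= N -> y i = x i) -> U y.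

Definition seq_continuous (X Y : nat -> Type) (S : (forall n, X n) -> Prop)
  (S' : (forall n, Y n) -> Prop) (f : (forall n, X n) -> forall n, Y n) : Prop :=
  (forall x, S x -> S' (f x)) /\
  forall V, seq_open S' V -> seq_open S (fun x => V (f x)).

Definition squot (T U : Type) (S : T -> Prop) (leT : T -> T -> Prop)
  (S' : U -> Prop) (leU : U -> U -> Prop) (f : T -> U) : Prop :=
  [/\ (forall x, S x -> S' (f x)),
      (forall b, S' b -> exists a, S a /\ f a = b),
      (forall x y, S x -> S y -> leT x y -> leU (f x) (f y)) &
      (forall a b, S' a -> S' b -> leU a b ->
         exists x y, [/\ S x, S y, leT x y, f x = a & f y = b])].

Definition downset (Q : finPoset) (A : {set Q}) : Prop :=
  forall x y : Q, x \in A -> le y x -> y \in A.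

Definition maximal_in (Q : finPoset) (A : {set Q}) (a : Q) : bool :=
  (a \in A) && [forall b in A, le a b ==> (b == a)].

Definition hat (Q R : finPoset) (f : Q -> R) (A : {set Q}) : {set R} :=
  [set y | [exists a, maximal_in A a && le y (f a)]].

(** \mathbb{O}(P) as a subset of \prod_n O(P_n), ordered coordinatewise by inclusion. *)
Definition inOO (P : nat -> finPoset) (p : forall n, P n.+1 -> P n)
  (A : forall n, {set P n}) : Prop :=
  (forall n, downset (A n)) /\ (forall n, hat (p n) (A n.+1) = A n).

Definition OO_le (P : nat -> finPoset) (A B : forall n, {set P n}) : Prop :=
  forall n, A n \subset B n.

Definition OO_join (P : nat -> finPoset) (A B : forall n, {set P n})
  : forall n, {set P n} := fun n => A n :|: B n.

Definition down_seq (P : nat -> finPoset) (x : forall n, P n)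
  : forall n, {set P n} := fun n => [set y | le y (x n)].

From mathcomp Require Import all_boot boolp zify.
From Stdlib Require Import PeanoNat Eqdep_dec.
Set Implicit Arguments. Unset Strict Implicit. Unset Printing Implicit Defensive.

(* The map is q(A)_n = down-closure of { f(x)_n : x in lim P, x_k in A_k for all k }, and
   r(C)_k = down-closure of { x_k : f(x)_j in C_j for all j } is a section of it: q(r(C)) = C,
   which gives surjectivity and the lifting of inclusions.  Everything rests on three facts
   about inverse limits of finite posets along quotient maps: every element of a member A of
   O(P) lies below a thread of maximal elements of A (hat maps maximal elements onto maximal
   elements); every relation a <= b in P_M is the M-th coordinate of a relation between
   threads; and, by compactness, the n-th coordinate of f depends only on finitely many
   coordinates of its argument.  The last fact gives continuity of q and, together with the
   first two, that q(A)_n only depends on A_M for M large.  Joins are preserved because a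
   thread lying in A u B lies in A or in B: down-sets are closed under the bonding maps, so
   once it leaves A it stays in B. *)

Section Chains.
Variables (T : nat -> Type) (t : forall n, T n.+1 -> T n).

Definition chain (x : forall n, T n) := forall n, t (x n.+1) = x n.

Lemma chain_exists (R : forall n, T n -> Prop) y0 :
  (forall n y, R n y -> exists2 y', R n.+1 y' & t y' = y) -> R 0 y0 ->
  exists2 x, chain x & forall n, R n (x n).
Proof.
move=> step R0.
have next n (y : {y | R n y}) : {y' | R n.+1 y' & t y' = sval y}.
  by case: y => y Ry; apply: cid2; exact: step.
pose fix s n : {y | R n y} :=
  match n return {y | R n y} with
  | 0 => exist _ y0 R0
  | m.+1 => exist _ (s2val (next m (s m))) (s2valP (next m (s m)))
  end.
exists (fun n => sval (s n)) => n; first exact: s2valP' (next n (s n)).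
exact: svalP (s n).
Qed.

Definition update (s : forall j, T j) k (z : T k) : forall j, T j :=
  fun j => if Nat.eq_dec k j is left e then eq_rect k T z j e else s j.

Lemma update_eq s k (z : T k) : update s z k = z.
Proof. by rewrite /update; case: (Nat.eq_dec k k) => // e; rewrite (UIP_refl_nat _ e). Qed.

Lemma update_neq s k (z : T k) j : j <> k -> update s z j = s j.
Proof. by rewrite /update; case: (Nat.eq_dec k j) => // e /(_ (esym e)). Qed.

Lemma chain_segment (d : forall n, T n) k (z : T k) :
  exists2 s : forall j, T j, s k = z & forall j, j < k -> t (s j.+1) = s j.
Proof.
elim: k z => [|k IH] z; first by exists (update d z) => //; exact: update_eq.
have [s sk sc] := IH (t z).
exists (update s z) => [|j]; first exact: update_eq.
rewrite ltnS leq_eqVlt => /orP [/eqP ->|ltjk].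
- by rewrite update_eq update_neq ?sk //; lia.
- by rewrite !update_neq; [exact: sc | lia | lia].
Qed.

Lemma chain_extend (d : forall n, T n) k (z : T k) (R : forall n, T n -> Prop) :
  (forall n y, k <= n -> R n y -> exists2 y', R n.+1 y' & t y' = y) -> R k z ->
  exists x, [/\ chain x, x k = z & forall n, k <= n -> R n (x n)].
Proof.
move=> step Rz; have [s sk sc] := chain_segment d z.
pose R' n (y : T n) := (n <= k -> s n = y) /\ (k <= n -> R n y).
have [x cx R'x] : exists2 x, chain x & forall n, R' n (x n).
  apply: (@chain_exists R' (s 0)) => [n y [sy Ry]|]; last first.
    by split => // k0; have e : k = 0 by [lia]; clear R'; subst k; rewrite sk.
  case: (ltnP n k) => nk.
  - exists (s n.+1); last by rewrite sc // sy // ltnW.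
    by split=> // kn; have e : k = n.+1 by [lia]; clear R'; subst k; rewrite sk.
  - have [y' Ry' ty'] := step n y nk (Ry nk).
    by exists y' => //; split => // ?; lia.
exists x; split => //; first by rewrite -(R'x k).1.
by move=> n kn; exact: (R'x n).2.
Qed.

Lemma chain_down (R : forall n, T n -> Prop) x M :
  chain x -> (forall n y, R n.+1 y -> R n (t y)) -> R M (x M) ->
  forall i, i <= M -> R i (x i).
Proof.
move=> cx stable; elim: M => [|M IH] xM i; first by rewrite leqn0 => /eqP ->.
rewrite leq_eqVlt => /orP [/eqP -> //|]; rewrite ltnS; apply: IH.
by rewrite -cx; exact: stable.
Qed.

Lemma chain_agree_below x y M :
  chain x -> chain y -> x M = y M -> forall i, i <= M -> x i = y i.
Proof.
move=> cx cy; apply: (@chain_down (fun n z => z = y n)) => // n _ ->; exact: cy.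
Qed.

End Chains.

Definition infinitely_often (Q : nat -> Prop) := forall m, exists2 M, m <= M & Q M.

Lemma infinitely_often_value (U : finType) (Q : nat -> Prop) (g : nat -> U) :
  infinitely_often Q -> exists u, infinitely_often (fun M => Q M /\ g M = u).
Proof.
move=> inf; apply: contrapT => /forallNP never.
have bound u : exists m, forall M, m <= M -> Q M -> g M <> u.
  have /existsNP [m hm] := never u.
  by exists m => M mM QM gM; apply: hm; exists M.
have [B HB] := choice bound.
have [M mM QM] := inf (\max_(u : U) B u).
by apply: (HB (g M) M) => //; apply: leq_trans mM; exact: leq_bigmax.
Qed.

Lemma chain_cluster (T : nat -> finType) (t : forall n, T n.+1 -> T n)
  (X : nat -> forall n, T n) :
  (forall M, chain t (X M)) ->
  exists2 Z, chain t Z & forall K, infinitely_often (fun M => X M K = Z K).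
Proof.
move=> cX; pose often k (z : T k) := infinitely_often (fun M => X M k = z).
have [z0 often0] : exists z0, often 0 z0.
  have [z0 hz0] := @infinitely_often_value _ (fun _ => True) (fun M => X M 0)
    (fun m => ex_intro2 _ _ m (leqnn m) I).
  by exists z0 => m; have [M mM [_ e]] := hz0 m; exists M.
apply: (@chain_exists _ t often z0) => // k z oz.
have [w hw] := @infinitely_often_value _ (fun M => X M k = z) (fun M => X M k.+1) oz.
exists w; first by move=> m; have [M mM [_ e]] := hw m; exists M.
by have [M _ [<- <-]] := hw 0; exact: cX.
Qed.

Lemma maximal_above (Q : finPoset) (S : {set Q}) a :
  a \in S -> exists2 m, maximal_in S m & le a m.
Proof.
move=> aS; pose above m := (m \in S) && le a m.
have aP : above a by rewrite /above aS le_refl.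
case: (@arg_maxnP _ a above (fun m => #|[set c | le c m]|) aP) => m /andP [mS am] mmax.
exists m => //.
rewrite /maximal_in mS; apply/forallP => b; apply/implyP => bS; apply/implyP => mb.
apply/eqP/le_anti => //; have := mmax b; rewrite /above bS (le_trans am mb) => /(_ isT).
apply: contraTT => nbm; rewrite -ltnNge; apply: proper_card; apply/properP; split.
  by apply/subsetP => c; rewrite !inE => cm; exact: le_trans cm mb.
by exists b; rewrite !inE ?le_refl.
Qed.

Lemma mem_hat (Q R : finPoset) (g : Q -> R) (S : {set Q}) y :
  {homo g : a b / le a b} -> y \in hat g S <-> exists2 a, a \in S & le y (g a).
Proof.
move=> g_homo; rewrite inE; split.
  by move=> /existsP [a /andP [/andP [aS _] ya]]; exists a.
move=> [a aS ya]; have [m Mm am] := maximal_above aS.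
by apply/existsP; exists m; rewrite Mm /=; exact: le_trans ya (g_homo _ _ am).
Qed.

Section InverseSystem.
Variables (Q : nat -> finPoset) (g : forall n, Q n.+1 -> Q n).

Definition lim_mem (A : forall n, {set Q n}) (x : forall n, Q n) :=
  inlim g x /\ forall n, x n \in A n.

Definition down_image (X : Type) (S : X -> Prop) (F : X -> forall n, Q n)
  : forall n, {set Q n} :=
  fun n => [set z | `[< exists2 x, S x & le z (F x n) >]].

Lemma mem_down_image (X : Type) (S : X -> Prop) F n z :
  z \in down_image S F n <-> exists2 x, S x & le z (F x n).
Proof. by rewrite inE; split => /asboolP. Qed.

Hypothesis gsys : inv_system g.

Let g_homo (n : nat) : {homo @g n : a b / le a b}.
Proof. by case: (gsys.2 n) => _ []. Qed.

Lemma inOO_down_image (X : Type) (S : X -> Prop) F :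
  (forall x, S x -> inlim g (F x)) -> inOO g (down_image S F).
Proof.
move=> SF; split=> [n z z' /mem_down_image [x Sx zx] z'z|n].
  by apply/mem_down_image; exists x => //; exact: le_trans z'z zx.
apply/setP => y; apply/idP/idP.
  move/(mem_hat _ _ (@g_homo n)) => [a /mem_down_image [x Sx ax] ya].
  apply/mem_down_image; exists x => //.
  by apply: le_trans ya _; rewrite -(SF x Sx n); exact: g_homo.
move/mem_down_image => [x Sx yx]; apply/(mem_hat _ _ (@g_homo n)).
exists (F x n.+1); last by rewrite (SF x Sx n).
by apply/mem_down_image; exists x => //; exact: le_refl.
Qed.

Lemma inOO_chain_down A x M :
  inOO g A -> inlim g x -> x M \in A M -> forall i, i <= M -> x i \in A i.
Proof.
move=> [_ hatA] cx; apply: (@chain_down _ g (fun n y => y \in A n)) => // n y yA.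
by rewrite -hatA; apply/mem_hat => //; exists y => //; exact: le_refl.
Qed.

Let point n : Q n := enum_val (Ordinal (gsys.1 n)).

Lemma lim_mem_above A k (a : Q k) :
  inOO g A -> a \in A k -> exists2 x, lim_mem A x & le a (x k).
Proof.
move=> OA aA; have [_ hatA] := OA.
have lift n (m : Q n) : maximal_in (A n) m ->
    exists2 m', maximal_in (A n.+1) m' & g m' = m.
  case/andP=> mA /forallP m_max; move: mA; rewrite -{1}hatA inE.
  case/existsP=> b /andP [b_max mb]; exists b => //; apply/eqP.
  have gbA : g b \in A n.
    by rewrite -hatA; apply/mem_hat => //; exists b; [case/andP: b_max|exact: le_refl].
  by have := m_max (g b); rewrite gbA mb.
have [m m_max am] := maximal_above aA.
have [x [cx xk x_max]] := chain_extend point (fun n y _ => lift n y) m_max.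
exists x; last by rewrite xk.
split=> // n; case: (leqP k n) => [kn|nk]; first by case/andP: (x_max n kn).
by apply: (inOO_chain_down OA cx) (ltnW nk); rewrite xk; case/andP: m_max.
Qed.

Lemma lim_le_lift M (a b : Q M) : le a b ->
  exists u v, [/\ inlim g u, inlim g v, lim_le u v, u M = a & v M = b].
Proof.
move=> ab; pose gg n (w : Q n.+1 * Q n.+1) := (g w.1, g w.2).
have lift n (w : Q n * Q n) : M <= n -> le w.1 w.2 ->
    exists2 w' : Q n.+1 * Q n.+1, le w'.1 w'.2 & gg n w' = w.
  case: w => a' b' _ /= /(proj2 (proj2 (gsys.2 n))) [x [y [xy <- <-]]].
  by exists (x, y).
have [w [cw wM w_le]] :=
  @chain_extend _ gg (fun n => (point n, point n)) M (a, b) _ lift ab.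
exists (fun n => (w n).1), (fun n => (w n).2); rewrite wM; split=> // [n|n|n].
- by rewrite -(cw n).
- by rewrite -(cw n).
- case: (leqP M n) => [Mn|nM]; first exact: w_le.
  apply: (@chain_down _ gg (fun n w => le w.1 w.2) _ M) (ltnW nM) => //.
    by move=> j [c d]; exact: g_homo.
  by rewrite wM.
Qed.

Lemma lim_mem_setU A B x : inOO g A -> inOO g B ->
  lim_mem (OO_join A B) x -> lim_mem A x \/ lim_mem B x.
Proof.
move=> OA OB [cx xAB]; have [xA|] := pselect (forall n, x n \in A n); first by left.
case/existsNP=> k xkA; right; split=> // n.
have xB M : k <= M -> x M \in B M.
  move=> kM; move: (xAB M); rewrite inE => /orP [xMA|//].
  by case: xkA; exact: inOO_chain_down OA cx xMA _ kM.
exact: inOO_chain_down OB cx (xB _ (leq_maxr n k)) _ (leq_maxl n k).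
Qed.

End InverseSystem.

Section LimitMap.
Variables (P H : nat -> finPoset) (p : forall n, P n.+1 -> P n) (h : forall n, H n.+1 -> H n).
Variable f : (forall n, P n) -> forall n, H n.

Definition modulus n M := forall x y, inlim p x -> inlim p y ->
  (forall i, i <= M -> x i = y i) -> f x n = f y n.

Lemma modulus_widen n M M' : M <= M' -> modulus n M -> modulus n M'.
Proof.
move=> MM' modM x y cx cy agr; apply: modM => // i iM.
by apply: agr; exact: leq_trans iM MM'.
Qed.

(* A continuous map on a compact space is uniformly continuous. *)
Lemma continuous_modulus :
  seq_continuous (inlim p) (inlim h) f -> forall n, exists M, modulus n M.
Proof.
move=> [_ f_open] n; apply: contrapT => /forallNP no_mod.
have bad M : exists xy : (forall n, P n) * (forall n, P n), [/\ inlim p xy.1, inlim p xy.2,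
    forall i, i <= M -> xy.1 i = xy.2 i & f xy.1 n <> f xy.2 n].
  apply: contrapT => /forallNP none; apply: (no_mod M) => x y cx cy agr.
  by apply: contrapT => ne; apply: (none (x, y)).
have [XY HXY] := choice bad.
have cX M : inlim p (XY M).1 by case: (HXY M).
have [Z cZ Z_lim] := @chain_cluster _ p (fun M => (XY M).1) cX.
have [K HK] := f_open (fun w => w n = f Z n)
  (fun w _ wn => ex_intro _ n (fun y _ agr => etrans (agr n (leqnn n)) wn)) Z cZ erefl.
have [M KM XZ] := Z_lim K K.
have [_ cY agr ne] := HXY M.
have XZ_agr := chain_agree_below (cX M) cZ XZ.
apply: ne; rewrite (HK _ (cX M) XZ_agr) (HK _ cY) // => i iK.
by rewrite -agr ?XZ_agr // (leq_trans iK KM).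
Qed.

Lemma uniform_modulus : (forall n, exists M, modulus n M) ->
  forall N, exists M, forall n, n <= N -> modulus n M.
Proof.
move=> mods; elim=> [|N [M1 HM1]].
  by have [M HM] := mods 0; exists M => n; rewrite leqn0 => /eqP ->.
have [M2 HM2] := mods N.+1; exists (maxn M1 M2) => n.
rewrite leq_eqVlt ltnS => /orP [/eqP ->|nN].
  exact: modulus_widen (leq_maxr _ _) HM2.
exact: modulus_widen (leq_maxl _ _) (HM1 n nN).
Qed.

Definition qmap (A : forall n, {set P n}) := down_image (lim_mem p A) f.

Definition rmap (C : forall n, {set H n}) :=
  down_image (fun x => inlim p x /\ forall n, f x n \in C n) (fun x => x).

Lemma qmap_homo A B : OO_le A B -> OO_le (qmap A) (qmap B).
Proof.
move=> AB n; apply/subsetP => z /mem_down_image [x [cx xA] zx].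
by apply/mem_down_image; exists x => //; split=> // k; exact: (subsetP (AB k)).
Qed.

Lemma rmap_homo C D : OO_le C D -> OO_le (rmap C) (rmap D).
Proof.
move=> CD n; apply/subsetP => z /mem_down_image [x [cx xC] zx].
by apply/mem_down_image; exists x => //; split=> // k; exact: (subsetP (CD k)).
Qed.

Hypothesis Psys : inv_system p.
Hypothesis Hsys : inv_system h.
Hypothesis f_lim : forall x, inlim p x -> inlim h (f x).
Hypothesis f_onto : forall w, inlim h w -> exists x, inlim p x /\ f x = w.
Hypothesis f_homo :
  forall x y, inlim p x -> inlim p y -> lim_le x y -> lim_le (f x) (f y).

Lemma qmap_inOO A : inOO h (qmap A).
Proof. by apply: (inOO_down_image Hsys) => x [cx _]; exact: f_lim. Qed.

Lemma rmap_inOO C : inOO p (rmap C).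
Proof. by apply: (inOO_down_image Psys) => x []. Qed.

Lemma le_at_modulus n M x y : modulus n M -> inlim p x -> inlim p y ->
  le (x M) (y M) -> le (f x n) (f y n).
Proof.
move=> modM cx cy xy; have [u [v [cu cv uv uM vM]]] := lim_le_lift Psys xy.
rewrite (modM x u) ?(modM y v) //; first exact: f_homo.
  by apply: chain_agree_below cy cv _; rewrite vM.
by apply: chain_agree_below cx cu _; rewrite uM.
Qed.

Lemma qmap_subset n M (A B : forall k, {set P k}) :
  modulus n M -> inOO p B -> A M \subset B M -> qmap A n \subset qmap B n.
Proof.
move=> modM OB AB; apply/subsetP => z /mem_down_image [x [cx xA] zx].
have [y [cy yB] xy] := lim_mem_above Psys OB (subsetP AB _ (xA M)).
apply/mem_down_image; exists y => //.
exact: le_trans zx (le_at_modulus modM cx cy xy).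
Qed.

Lemma qmap_continuous : (forall n, exists M, modulus n M) ->
  seq_continuous (inOO p) (inOO h) qmap.
Proof.
move=> mods; split=> [A _|V V_open A OA VqA]; first exact: qmap_inOO.
have [N HN] := V_open _ (qmap_inOO A) VqA; have [M HM] := uniform_modulus mods N.
exists M => B OB BA; apply: HN (qmap_inOO B) _ => n nN.
by apply/eqP; rewrite eqEsubset !(qmap_subset (HM n nN)) // BA.
Qed.

Lemma qmap_rmap C : (forall n, exists M, modulus n M) -> inOO h C -> qmap (rmap C) = C.
Proof.
move=> mods OC; apply: functional_extensionality_dep => n; apply/setP => z.
apply/idP/idP => [/mem_down_image [x [cx xr] zx]|zC].
  have [M modM] := mods n; have /mem_down_image [y [cy yC] xy] := xr M.
  exact: OC.1 _ _ _ (yC n) (le_trans zx (le_at_modulus modM cx cy xy)).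
have [w [cw wC] zw] := lim_mem_above Hsys OC zC; have [x [cx fx]] := f_onto cw.
apply/mem_down_image; exists x; last by rewrite fx.
split=> // k; apply/mem_down_image; exists x; last exact: le_refl.
by split=> // j; rewrite fx.
Qed.

Lemma qmap_squot : (forall n, exists M, modulus n M) ->
  squot (inOO p) (@OO_le P) (inOO h) (@OO_le H) qmap.
Proof.
move=> mods; split=> [A _|C OC|A B _ _|C D OC OD CD]; first exact: qmap_inOO.
- by exists (rmap C); split; [exact: rmap_inOO | exact: qmap_rmap].
- exact: qmap_homo.
- exists (rmap C), (rmap D).
  by split; [exact: rmap_inOO | exact: rmap_inOO | exact: rmap_homo | exact: qmap_rmap ..].
Qed.

Lemma qmap_join A B : inOO p A -> inOO p B ->
  forall n, qmap (OO_join A B) n = OO_join (qmap A) (qmap B) n.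
Proof.
move=> OA OB n; apply/setP => z; rewrite [in RHS]inE; apply/idP/orP.
  move/mem_down_image=> [x /(lim_mem_setU Psys OA OB) [xA|xB] zx].
  - by left; apply/mem_down_image; exists x.
  - by right; apply/mem_down_image; exists x.
case=> zq.
- by apply: (subsetP (qmap_homo _ n)) zq => k; exact: subsetUl.
- by apply: (subsetP (qmap_homo _ n)) zq => k; exact: subsetUr.
Qed.

Lemma qmap_down_seq x : inlim p x -> forall n, qmap (down_seq x) n = down_seq (f x) n.
Proof.
move=> cx n; apply/setP => z; rewrite [in RHS]inE; apply/idP/idP.
  case/mem_down_image=> y [cy yx] zy; apply: le_trans zy _; apply: f_homo => // k.
  by move: (yx k); rewrite inE.
by move=> zx; apply/mem_down_image; exists x => //; split=> // k; rewrite inE le_refl.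
Qed.

End LimitMap.

Theorem mainTheorem17
  (H P : nat -> finPoset)
  (h : forall n, H n.+1 -> H n) (p : forall n, P n.+1 -> P n)
  (Hsys : inv_system h) (Psys : inv_system p) (Pfr : fraisse p)
  (f : (forall n, P n) -> forall n, H n)
  (fcont : seq_continuous (inlim p) (inlim h) f)
  (fq : squot (inlim p) (@lim_le P) (inlim h) (@lim_le H) f) :
  exists q : (forall n, {set P n}) -> forall n, {set H n},
    [/\ seq_continuous (inOO p) (inOO h) q,
        squot (inOO p) (@OO_le P) (inOO h) (@OO_le H) q,
        (forall A B, inOO p A -> inOO p B ->
           forall n, q (OO_join A B) n = OO_join (q A) (q B) n) &
        (forall x, inlim p x -> forall n, q (down_seq x) n = down_seq (f x) n)].
Proof.
case: fq => f_lim f_onto f_homo _; have mods := continuous_modulus fcont.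
exists (qmap p f); split.
- exact: qmap_continuous.
- exact: qmap_squot.
- exact: qmap_join.
- exact: qmap_down_seq.
Qed.
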